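(* Let $S$ be a reflective numerical semigroup with $\mathrm{g}(S)\ge1$. Then \[ \mathrm{e}(S)\ \ge\ \frac{\mathrm{F}(S)+1}{\mathrm{F}(S)+1-\mathrm{g}(S)}, \] where $\mathrm{e}(S)$ denotes the embedding dimension of $S$.
   Context: A numerical semigroup is a submonoid $S$ of $(\mathbb{N}_0,+)$ with finite complement; $\mathrm{g}(S)$ is the number of its gaps (elements of $\mathbb{N}_0\setminus S$), $\mathrm{F}(S)$ is its largest gap, and $\mathrm{e}(S)$ is the cardinality of its minimal generating set. A numerical semigroup $S$ of genus $g\ge1$ is called reflective if for every $z\in\{0,1,\dots,g-1\}$ exactly one of $z$ and $z+g$ belongs to $S$. *)

From mathcomp Require Import all_boot.
From mathcomp Require Import all_algebra.
Set Implicit Arguments. Unset Strict Implicit. Unset Printing Implicit Defensive.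

Definition numerical_semigroup (S : pred nat) : Prop :=
  [/\ S 0,
      (forall a b, S a -> S b -> S (a + b)) &
      exists N, forall n, N <= n -> S n].

Definition gap_list (S : pred nat) (gs : seq nat) : Prop :=
  uniq gs /\ forall x, (x \in gs) = ~~ S x.

Definition is_genus (S : pred nat) (g : nat) : Prop :=
  exists gs, gap_list S gs /\ size gs = g.

Definition is_frobenius (S : pred nat) (F : nat) : Prop :=
  ~~ S F /\ forall x, F < x -> S x.

(* The minimal generating set of S is Sx \ (Sx + Sx), where Sx = S \ {0}. *)
Definition min_generator (S : pred nat) (x : nat) : bool :=
  [&& S x, 0 < x &
      ~~ [exists a : 'I_(x.+1), exists b : 'I_(x.+1),
            [&& S a, 0 < a, S b, 0 < b & a + b == x]]].

Definition is_embedding_dim (S : pred nat) (e : nat) : Prop :=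
  exists ms, [/\ uniq ms, (forall x, (x \in ms) = min_generator S x) & size ms = e].

Definition reflective (S : pred nat) (g : nat) : Prop :=
  1 <= g /\ forall z, z < g -> S z != S (z + g).

From mathcomp Require Import all_boot all_algebra zify.
Set Implicit Arguments. Unset Strict Implicit.
Import GRing.Theory Num.Theory.

(* Reflectivity determines S from its multiplicity m: below g, S consists of
   the multiples of m; on [g, 2g) it consists of the g + z with m not dividing z;
   and everything from 2g on lies in S.  Hence F >= g + m * (g div m).
   If g < m, the elements g+1, ..., 2g+1 lie below 2m and so are minimal
   generators, whence e > g.  Otherwise m, the g + z with 0 < z < m and m not
   dividing g + z, and 2g+1 when m divides g+1, are minimal generators; this
   gives e >= 2, and e >= 3 as soon as g mod m >= 2, which is all the bound needs. *)

Lemma min_generator_intro (S : pred nat) x : S x -> 0 < x ->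
  (forall a b, S a -> 0 < a -> S b -> 0 < b -> a + b = x -> False) ->
  min_generator S x.
Proof.
move=> Sx x_gt0 indec; rewrite /min_generator Sx x_gt0 /=.
apply/negP => /existsP [a /existsP [b /and5P [Sa a_gt0 Sb b_gt0 /eqP ab]]].
exact: (indec a b).
Qed.

Lemma embedding_dim_ge_size (S : pred nat) e (L : seq nat) :
  is_embedding_dim S e -> uniq L -> {subset L <= min_generator S} -> size L <= e.
Proof.
move=> [ms [_ ms_gen <-]] uL L_gen; apply: uniq_leq_size => // x /L_gen.
by rewrite ms_gen.
Qed.

Section Multiplicity.

Variables (S : pred nat) (m : nat).
Hypothesis S0 : S 0.
Hypothesis Sadd : forall a b, S a -> S b -> S (a + b).
Hypothesis Sm : S m.
Hypothesis m_min : forall x, 0 < x -> S x -> m <= x.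

Lemma mem_mulnl k : S (k * m).
Proof. by elim: k => [|k IHk] //; rewrite mulSn Sadd. Qed.

Lemma mem_dvdn x : m %| x -> S x.
Proof. by move=> /dvdnP [k ->]; apply: mem_mulnl. Qed.

Lemma min_generator_lt_double x : S x -> 0 < x -> x < 2 * m -> min_generator S x.
Proof.
move=> Sx x_gt0 x_lt; apply: min_generator_intro => // a b Sa a_gt0 Sb b_gt0 ab.
by move: x_lt; rewrite -ab mul2n -addnn ltnNge (leq_add (m_min a_gt0 Sa) (m_min b_gt0 Sb)).
Qed.

End Multiplicity.

Section Reflective.

Variables (S : pred nat) (g m : nat).
Hypothesis S0 : S 0.
Hypothesis Sadd : forall a b, S a -> S b -> S (a + b).
Hypothesis genus_g : is_genus S g.
Hypothesis refl_g : reflective S g.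
Hypothesis Sm : S m.
Hypothesis m_gt0 : 0 < m.
Hypothesis m_min : forall x, 0 < x -> S x -> m <= x.

Let refl z : z < g -> S z != S (z + g). Proof. by case: refl_g => _; apply. Qed.

(* Each of the [g] pairs [{z, z + g}] with [z < g] contains a gap, so these are all the gaps. *)
Lemma reflective_ge_double x : 2 * g <= x -> S x.
Proof.
case: genus_g => gs [[uniq_gs mem_gs] size_gs] x_ge; apply/negPn/negP => nSx.
pose gap_of z := if S z then z + g else z.
suff: size (x :: map gap_of (iota 0 g)) <= size gs.
  by rewrite /= size_map size_iota size_gs ltnn.
apply: uniq_leq_size.
  rewrite /= map_inj_in_uniq ?iota_uniq; last first.
    by move=> a b; rewrite !mem_iota /gap_of; case: (S a); case: (S b); lia.
  rewrite andbT; apply/mapP => -[z]; rewrite mem_iota /gap_of.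
  by case: (S z); lia.
move=> y; rewrite inE mem_gs => /orP [/eqP -> //|/mapP [z]].
rewrite mem_iota add0n /gap_of => /andP [_ /refl] + ->.
by case Sz: (S z); case: (S (z + g)); rewrite /= ?Sz.
Qed.

Lemma reflective_genus_gap : ~~ S g.
Proof. by have := refl (proj1 refl_g); rewrite add0n S0; case: (S g). Qed.

Lemma reflective_subn a s : a < g -> S a -> S s -> s <= a -> S (a - s).
Proof.
move=> a_lt Sa Ss s_le; apply/negPn/negP => nSas.
have Sasg : S (a - s + g).
  have := refl (leq_ltn_trans (leq_subr s a) a_lt).
  by rewrite (negbTE nSas); case: (S _).
have := Sadd Sasg Ss; rewrite (_ : a - s + g + s = a + g); last by lia.
by have := refl a_lt; rewrite Sa; case: (S _).
Qed.

Lemma reflective_lowE z : z < g -> S z = (m %| z).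
Proof.
move=> z_lt; apply/idP/idP => [Sz|]; last exact: mem_dvdn.
have := reflective_subn z_lt Sz (mem_mulnl S0 Sadd Sm (z %/ m)) (leq_divM z m).
rewrite {1}(divn_eq z m) addKn /dvdn => Szm; apply/negPn/negP; rewrite -lt0n => zm_gt0.
by have := m_min zm_gt0 Szm; rewrite leqNgt ltn_pmod.
Qed.

Lemma reflective_highE z : z < g -> S (z + g) = ~~ (m %| z).
Proof.
by move=> z_lt; have := refl z_lt; rewrite reflective_lowE //; case: (S _); case: (_ %| _).
Qed.

Lemma reflective_ndvd_genus : ~~ (m %| g).
Proof. by apply: contra reflective_genus_gap; apply: mem_dvdn. Qed.

Lemma reflective_multiplicity_gt1 : 1 < m.
Proof.
by move: reflective_ndvd_genus m_gt0; case: m => [|[|]] //; rewrite dvd1n.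
Qed.

Lemma reflective_frobenius_ge F : is_frobenius S F -> g + g %/ m * m <= F.
Proof.
move=> [_ S_gtF]; rewrite leqNgt; apply/negP => /S_gtF.
rewrite addnC reflective_highE ?dvdn_mull //.
rewrite ltn_neqAle leq_trunc_div andbT.
by apply: contraNneq reflective_ndvd_genus => <-; apply: dvdn_mull.
Qed.

Lemma reflective_embedding_dim_small e : g < m -> is_embedding_dim S e -> g < e.
Proof.
move=> g_lt e_dim; rewrite -[g.+1](size_iota g.+1).
apply: embedding_dim_ge_size e_dim (iota_uniq _ _) _ => x.
rewrite mem_iota => /andP [x_gt x_le].
apply: (min_generator_lt_double m_min); [|exact: leq_ltn_trans (leq0n g) x_gt|lia].
have [x_lt|] := ltnP x (2 * g); last exact: reflective_ge_double.
rewrite -(subnK (ltnW x_gt)) reflective_highE; last lia.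
by apply/negP => /dvdn_leq; rewrite subn_gt0 => /(_ x_gt); lia.
Qed.

Lemma min_generator_add_genus z :
  0 < z < m -> z < g -> ~~ (m %| g + z) -> min_generator S (g + z).
Proof.
move=> /andP [z_gt0 z_lt] z_ltg ndvd; apply: min_generator_intro; last first.
- move=> a b Sa a_gt0 Sb b_gt0 ab.
  have [a_ge b_ge] := (m_min a_gt0 Sa, m_min b_gt0 Sb).
  have [a_lt|] := ltnP a g; last lia.
  have [b_lt|] := ltnP b g; last lia.
  have da : m %| a by rewrite -reflective_lowE.
  have db : m %| b by rewrite -reflective_lowE.
  by move: ndvd; rewrite -ab dvdn_add.
- by rewrite addn_gt0 z_gt0 orbT.
rewrite addnC reflective_highE //.
by apply/negP => /(dvdn_leq z_gt0); rewrite leqNgt z_lt.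
Qed.

Lemma min_generator_double_genus_succ :
  m < g -> m %| g.+1 -> min_generator S (2 * g).+1.
Proof.
move=> m_lt dvd_g1; have m_gt1 := reflective_multiplicity_gt1.
apply: min_generator_intro => //; first exact: reflective_ge_double.
suff indec_lt a b : S a -> 0 < a -> S b -> a + b = (2 * g).+1 -> a < g -> False.
  move=> a b Sa a_gt0 Sb b_gt0 ab.
  have [a_lt|a_ge] := ltnP a g; first exact: (indec_lt a b).
  have [b_lt|b_ge] := ltnP b g; first by apply: (indec_lt b a); rewrite // addnC.
  have [a_ne b_ne] : a != g /\ b != g.
    by split; apply: contraNneq reflective_genus_gap => <-.
  lia.
move=> Sa a_gt0 Sb ab a_lt.
have da : m %| a by rewrite -reflective_lowE.
have a_ge := m_min a_gt0 Sa.
move: Sb; rewrite (_ : b = g.+1 - a + g); last lia.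
by rewrite reflective_highE ?dvdn_sub //; lia.
Qed.

Lemma reflective_embedding_dim_large e :
  m < g -> is_embedding_dim S e -> m.-1 + (m %| g.+1) <= e.
Proof.
move=> m_lt e_dim; have m_gt1 := reflective_multiplicity_gt1.
have gm_gt0 : 0 < g %% m by rewrite lt0n; apply: reflective_ndvd_genus.
have gm_lt : g %% m < m by rewrite ltn_pmod.
set r := m - g %% m.
have r_in : r \in iota 1 m.-1 by rewrite mem_iota; lia.
have mem_offsets z : (z \in rem r (iota 1 m.-1)) = (z != r) && (0 < z < m).
  by rewrite mem_rem_uniq ?iota_uniq // inE mem_iota; congr (_ && _); lia.
(* [g + z] is divisible by [m] exactly for [z = r] in the range [0 < z < m]. *)
have ndvd_genus_add z : z \in rem r (iota 1 m.-1) -> ~~ (m %| g + z).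
  rewrite mem_offsets => /andP [z_ne /andP [z_gt0 z_lt]].
  rewrite {1}(divn_eq g m) -addnA dvdn_addr ?dvdn_mull //.
  apply/negP => /dvdnP [k kE]; move: z_ne; rewrite /r.
  have [k_le|k_gt] := leqP k 1; last by nia.
  by case: k k_le kE => [|[]] //; lia.
pose L := m :: [seq g + z | z <- rem r (iota 1 m.-1)] ++ nseq (m %| g.+1) (2 * g).+1.
have -> : m.-1 + (m %| g.+1) = size L.
  by rewrite /= size_cat size_map size_rem // size_iota size_nseq; lia.
apply: embedding_dim_ge_size e_dim _ _.
  rewrite /L /= cat_uniq map_inj_in_uniq ?rem_uniq ?iota_uniq //; last first.
    by move=> a b _ _ /addnI.
  rewrite mem_cat negb_or mem_nseq; apply/and4P; split => //.
  - apply/andP; split; first by apply/negP => /mapP [z _]; lia.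
    by apply/negP => /andP [_ /eqP]; lia.
  - apply/hasPn => x; rewrite mem_nseq => /andP [_ /eqP ->].
    by apply/negP => /mapP [z]; rewrite mem_offsets; lia.
  - by case: (m %| g.+1).
move=> x; rewrite inE mem_cat mem_nseq => /or3P [/eqP ->| /mapP [z z_in ->] | /andP [dvd_g1 /eqP ->]].
- by apply: (min_generator_lt_double m_min) => //; lia.
- apply: min_generator_add_genus; last exact: ndvd_genus_add.
    by move: z_in; rewrite mem_offsets; lia.
  by move: z_in; rewrite mem_offsets; lia.
- by apply: min_generator_double_genus_succ => //; case: (m %| g.+1) dvd_g1.
Qed.

End Reflective.

Lemma frobenius_embedding_large g m F e :
  0 < m < g -> ~~ (m %| g) -> g + g %/ m * m <= F -> m.-1 + (m %| g.+1) <= e ->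
  F.+1 <= e * (F.+1 - g).
Proof.
move=> /andP [m_gt0 m_lt] ndvd F_ge e_ge.
have gE := divn_eq g m; set q := g %/ m in F_ge gE; set rr := g %% m in gE.
have rr_gt0 : 0 < rr by rewrite lt0n.
have rr_lt : rr < m by rewrite ltn_pmod.
have q_gt0 : 0 < q by rewrite divn_gt0 // ltnW.
have {}e_ge : 2 + (1 < rr) <= e.
  have [rrE|rr_ne] := eqVneq rr.+1 m; last by case: (m %| g.+1) e_ge; lia.
  by move: e_ge; rewrite gE -addnS rrE dvdn_add ?dvdn_mull //; lia.
by move: e_ge; case: (ltnP 1 rr) => /= rr_1 e_ge; nia.
Qed.

Lemma reflective_frobenius_embedding S g F e :
  numerical_semigroup S -> is_genus S g -> is_frobenius S F ->
  is_embedding_dim S e -> reflective S g ->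
  g <= F /\ F.+1 <= e * (F.+1 - g).
Proof.
move=> [S0 Sadd [N S_geN]] genus_g F_frob e_dim refl_g.
have S_pos : exists x, (0 < x) && S x by exists N.+1; rewrite /= S_geN.
case: (ex_minnP S_pos) => m /andP [m_gt0 Sm] m_min.
have {}m_min x : 0 < x -> S x -> m <= x by move=> x_gt0 Sx; apply: m_min; rewrite x_gt0.
have F_ge : g + g %/ m * m <= F by apply: (reflective_frobenius_ge (S := S) (m := m)).
have g_le : g <= F := leq_trans (leq_addr _ _) F_ge.
split => //.
have [g_lt|m_lt|gm] := ltngtP g m.
- have e_gt : g < e by apply: (reflective_embedding_dim_small (S := S) (m := m)).
  have FE : F.+1 = g + (F.+1 - g) by rewrite subnKC // leqW.
  rewrite {1}FE; set n := F.+1 - g; have n_gt0 : 0 < n by rewrite subn_gt0.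
  nia.
- apply: frobenius_embedding_large F_ge _; first by rewrite m_gt0.
    exact: (reflective_ndvd_genus (S := S) (m := m)).
  exact: (reflective_embedding_dim_large (S := S) (m := m)).
- by move: (reflective_genus_gap S0 refl_g); rewrite gm Sm.
Qed.

Local Open Scope ring_scope.

Theorem mainTheorem14 (S : pred nat) (g F e : nat) :
  numerical_semigroup S ->
  is_genus S g -> (1 <= g)%N ->
  is_frobenius S F ->
  is_embedding_dim S e ->
  reflective S g ->
  (F.+1)%:R / (F.+1 - g)%:R <= (e%:R : rat).
Proof.
move=> S_num genus_g _ F_frob e_dim refl_g.
have [g_le F_bound] := reflective_frobenius_embedding S_num genus_g F_frob e_dim refl_g.
have n_gt0 : (0 < F.+1 - g)%N by rewrite subn_gt0 ltnS.
by rewrite ler_pdivrMr ?ltr0n // -natrM ler_nat.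
Qed.
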